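(* Let $G$ be the undirected graph with vertex set $\{v_1,\dots,v_8\}$ and edge set $\{v_1v_5,\ v_1v_6,\ v_2v_5,\ v_2v_6,\ v_2v_7,\ v_2v_8,\ v_4v_7,\ v_4v_8\}$. Consider the problem of finding a population of size two of $4$-vertex covers of $G$ maximizing the Hamming distance between its two members. The sets $V_1=\{v_1,v_2,v_7,v_8\}$, $V_2=\{v_2,v_4,v_5,v_6\}$, $V_3=\{v_1,v_2,v_3,v_4\}$, $V_4=\{v_5,v_6,v_7,v_8\}$ are $4$-vertex covers of $G$, and $V_1$, $V_2$, $V_4$ are non-excessive. Moreover, the unique population of size two with the maximum Hamming distance, which equals $8$, is $(V_3,V_4)$. The population $(V_1,V_2)$ has Hamming distance $6$, and replacing either of its individuals with a different vertex cover of size $3$ or $4$ strictly reduces the Hamming distance between the two individuals; that is, this population is a local optimum.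
   Context: A vertex cover of $G=(V,E)$ is a set $C\subseteq V$ such that every edge has at least one endpoint in $C$; a $4$-vertex cover is a vertex cover of size at most $4$. A vertex cover $C$ is non-excessive if for every $v\in C$, $C\setminus\{v\}$ is not a vertex cover. Subsets of $V$ are identified with bit strings of length $|V|$ (the $i$-th bit indicates whether $v_i$ is included), and the Hamming distance between two sets is the Hamming distance between the corresponding bit strings, i.e. the size of their symmetric difference. A population of size two is a pair (multiset) of two covers. *)

From mathcomp Require Import all_boot.
Set Implicit Arguments. Unset Strict Implicit. Unset Printing Implicit Defensive.

(* Vertex v_i (1 <= i <= 8) is represented by the ordinal i-1 : 'I_8. *)
Definition V := 'I_8.
Definition v (i : nat) : V := inord i.-1.

Definition G_edges : seq (nat * nat) :=
  [:: (1,5); (1,6); (2,5); (2,6); (2,7); (2,8); (4,7); (4,8)].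

Definition adj (x y : V) : bool :=
  has (fun e => ((v e.1 == x) && (v e.2 == y)) || ((v e.1 == y) && (v e.2 == x)))
      G_edges.

Definition vertex_cover (C : {set V}) : Prop :=
  forall x y : V, adj x y -> (x \in C) || (y \in C).

Definition k_vertex_cover (k : nat) (C : {set V}) : Prop :=
  vertex_cover C /\ #|C| <= k.

Definition non_excessive (C : {set V}) : Prop :=
  vertex_cover C /\ forall x, x \in C -> ~ vertex_cover (C :\ x).

Definition hamming (A B : {set V}) : nat := #|(A :\: B) :|: (B :\: A)|.

Definition V1 : {set V} := [set v 1; v 2; v 7; v 8].
Definition V2 : {set V} := [set v 2; v 4; v 5; v 6].
Definition V3 : {set V} := [set v 1; v 2; v 3; v 4].
Definition V4 : {set V} := [set v 5; v 6; v 7; v 8].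

From mathcomp Require Import all_boot zify.

(** G is the union of the 4-cycles v1 v5 v2 v6 and v2 v7 v4 v8, which share v2,
    and a set covers a 4-cycle iff it contains one of its two diagonals:
    {v1, v2} or {v5, v6}, and {v2, v4} or {v7, v8}.
    Two sets at Hamming distance 8 = |V| are complementary. The one missing v2
    contains both {v5, v6} and {v7, v8}, hence is V4 if it has at most four
    vertices, and the other one is V3.
    As hamming C D = |C| + |D| - 2 |C ∩ D|, a cover C with |C| <= 4 is at
    distance < 6 from V2 once it shares two vertices with V2 (one if |C| <= 3).
    It contains {v5, v6}, or else v1 and v2; in the latter case it contains v4
    as well, or else {v7, v8}, which forces C = V1. V1 is handled symmetrically. *)

(* Outside 1..8, [v i] is the junk value [v 1]; this form needs no range
   side condition and evaluates on numerals. *)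
Lemma eq_vE i j :
  (v i == v j) = ((if i.-1 < 8 then i.-1 else 0) == (if j.-1 < 8 then j.-1 else 0)).
Proof.
have val_v k : val (v k) = if k.-1 < 8 then k.-1 else 0.
  by rewrite /v /inord /insubd; case: insubP => [u -> -> | /negbTE ->].
by rewrite -val_eqE /= !val_v.
Qed.

Lemma enum_V : enum V = map v (iota 1 8).
Proof.
apply: (inj_map val_inj); rewrite val_enum_ord -map_comp.
rewrite [LHS](_ : _ = map predn (iota 1 8)) //; apply/eq_in_map => i.
by rewrite mem_iota => /andP[i_gt0 i_lt9] /=; rewrite inordK //; lia.
Qed.

Lemma card_V (A : {set V}) : #|A| = count (fun i => v i \in A) (iota 1 8).
Proof. by rewrite cardE /enum_mem size_filter -enumT enum_V count_map. Qed.

Lemma forall_labels (P : pred V) : all (fun i => P (v i)) (iota 1 8) -> forall x, P x.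
Proof.
move/allP=> Pv x; have: x \in enum V by rewrite mem_enum.
by rewrite enum_V => /mapP[i /Pv Pvi ->].
Qed.

Lemma card_V1 : #|V1| = 4.
Proof. by rewrite card_V; under eq_count => i do rewrite !inE !eq_vE. Qed.

Lemma card_V2 : #|V2| = 4.
Proof. by rewrite card_V; under eq_count => i do rewrite !inE !eq_vE. Qed.

Lemma card_V3 : #|V3| = 4.
Proof. by rewrite card_V; under eq_count => i do rewrite !inE !eq_vE. Qed.

Lemma card_V4 : #|V4| = 4.
Proof. by rewrite card_V; under eq_count => i do rewrite !inE !eq_vE. Qed.

Lemma setC_V4 : ~: V4 = V3.
Proof.
apply/setP => x; apply/eqP; move: x.
apply: (forall_labels (fun x => (x \in ~: V4) == (x \in V3))).
by under eq_all => i do rewrite !inE !eq_vE.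
Qed.

Lemma vertex_cover_edgesP (C : {set V}) :
  reflect (vertex_cover C) (all (fun e => (v e.1 \in C) || (v e.2 \in C)) G_edges).
Proof.
apply: (iffP allP) => [coverC x y /hasP[e /coverC Ce exy] | coverC e eG].
  by move: Ce; case/orP: exy => /andP[/eqP<- /eqP<-] //; rewrite orbC.
by apply: coverC; apply/hasP; exists e; rewrite ?eqxx.
Qed.

Lemma cover_square (a b c d r : bool) :
  [&& a || c, a || d, b || c, b || d & r] = ((a && b) || (c && d)) && r.
Proof. by case: a b c d => [] [] [] []. Qed.

Definition diag_cover (C : {set V}) : bool :=
  ((v 1 \in C) && (v 2 \in C) || (v 5 \in C) && (v 6 \in C)) &&
  ((v 2 \in C) && (v 4 \in C) || (v 7 \in C) && (v 8 \in C)).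

Lemma vertex_coverP (C : {set V}) : reflect (vertex_cover C) (diag_cover C).
Proof.
suff -> : diag_cover C = all (fun e => (v e.1 \in C) || (v e.2 \in C)) G_edges.
  exact: vertex_cover_edgesP.
by rewrite /= !cover_square andbT.
Qed.

Lemma diag_cover_V : [&& diag_cover V1, diag_cover V2, diag_cover V3 & diag_cover V4].
Proof. by apply/and4P; split; rewrite /diag_cover !inE !eq_vE. Qed.

Lemma non_excessive_labels (C : {set V}) :
  diag_cover C -> all (fun i => (v i \in C) ==> ~~ diag_cover (C :\ v i)) (iota 1 8) ->
  non_excessive C.
Proof.
move=> /vertex_coverP coverC.
move=> /(forall_labels (fun x => (x \in C) ==> ~~ diag_cover (C :\ x))) minC.
by split=> // x Cx /vertex_coverP; apply/negP/(implyP (minC x) Cx).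
Qed.

Lemma cover_without_v2 (B : {set V}) :
  vertex_cover B -> #|B| <= 4 -> v 2 \notin B -> B = V4.
Proof.
move=> /vertex_coverP /andP[sq1 sq2] B4 B2.
move: sq1 sq2; rewrite (negbTE B2) !andbF /= => /andP[B5 B6] /andP[B7 B8].
apply/esym/eqP; rewrite eqEcard card_V4 B4 andbT.
by rewrite !subUset !sub1set B5 B6 B7 B8.
Qed.

Lemma hamming_card (A B : {set V}) : hamming A B + 2 * #|A :&: B| = #|A| + #|B|.
Proof.
have disjD : (A :\: B) :&: (B :\: A) = set0.
  by apply/setP => x; rewrite !inE; case: (x \in A); case: (x \in B).
have := cardsUI (A :\: B) (B :\: A); rewrite disjD cards0 addn0 /hamming => ->.
by move: (cardsID B A) (cardsID A B); rewrite [B :&: A]setIC; lia.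
Qed.

Lemma hamming_le8 (A B : {set V}) : hamming A B <= 8.
Proof. by rewrite -(card_ord 8) max_card. Qed.

Lemma hamming_eq8 (A B : {set V}) : (hamming A B == 8) = (B == ~: A).
Proof.
have -> : (B == ~: A) = ((A :\: B) :|: (B :\: A) == setT).
  apply/eqP/eqP => [-> | symT]; apply/setP => x.
    by rewrite !inE; case: (x \in A).
  by move/setP/(_ x): symT; rewrite !inE; case: (x \in A); case: (x \in B).
by rewrite eqEcard subsetT cardsT card_ord eqn_leq -{1}(card_ord 8) max_card.
Qed.

Lemma hamming_V2_lt6 (C : {set V}) :
  vertex_cover C -> #|C| <= 4 -> C != V1 -> hamming C V2 < 6.
Proof.
move=> /vertex_coverP /andP[sq1 sq2] C_le4 CV1.
suff common : #|C| < 2 * #|C :&: V2| + 2.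
  by have := hamming_card C V2; rewrite card_V2; lia.
case/orP: sq1 => [/andP[C1 C2] | /andP[C5 C6]]; last first.
  have : 1 < #|C :&: V2|.
    by apply/card_gt1P; exists (v 5), (v 6); rewrite !inE C5 C6 !eq_vE.
  by lia.
have [C_lt4 | _] := ltnP #|C| 4.
  have : 0 < #|C :&: V2| by apply/card_gt0P; exists (v 2); rewrite !inE C2 !eq_vE.
  by lia.
case C4: (v 4 \in C).
  have : 1 < #|C :&: V2|.
    by apply/card_gt1P; exists (v 2), (v 4); rewrite !inE C2 C4 !eq_vE.
  by lia.
move: sq2; rewrite C4 andbF /= => /andP[C7 C8].
case/negP: CV1; rewrite eq_sym eqEcard card_V1 C_le4 andbT.
by rewrite !subUset !sub1set C1 C2 C7 C8.
Qed.

Lemma hamming_V1_lt6 (C : {set V}) :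
  vertex_cover C -> #|C| <= 4 -> C != V2 -> hamming V1 C < 6.
Proof.
move=> /vertex_coverP /andP[sq1 sq2] C_le4 CV2.
suff common : #|C| < 2 * #|V1 :&: C| + 2.
  by have := hamming_card V1 C; rewrite card_V1; lia.
case/orP: sq2 => [/andP[C2 C4] | /andP[C7 C8]]; last first.
  have : 1 < #|V1 :&: C|.
    by apply/card_gt1P; exists (v 7), (v 8); rewrite !inE C7 C8 !eq_vE.
  by lia.
have [C_lt4 | _] := ltnP #|C| 4.
  have : 0 < #|V1 :&: C| by apply/card_gt0P; exists (v 2); rewrite !inE C2 !eq_vE.
  by lia.
case C1: (v 1 \in C).
  have : 1 < #|V1 :&: C|.
    by apply/card_gt1P; exists (v 1), (v 2); rewrite !inE C1 C2 !eq_vE.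
  by lia.
move: sq1; rewrite C1 /= => /andP[C5 C6].
case/negP: CV2; rewrite eq_sym eqEcard card_V2 C_le4 andbT.
by rewrite !subUset !sub1set C2 C4 C5 C6.
Qed.

Theorem lemma3 :
  (* V1..V4 are 4-vertex covers *)
  [/\ k_vertex_cover 4 V1, k_vertex_cover 4 V2, k_vertex_cover 4 V3
    & k_vertex_cover 4 V4] /\
  (* V1, V2, V4 are non-excessive *)
  [/\ non_excessive V1, non_excessive V2 & non_excessive V4] /\
  (* (V3, V4) is the unique population of size two of 4-vertex covers
     with maximum Hamming distance, which equals 8 *)
  (hamming V3 V4 = 8 /\
   forall A B : {set V}, k_vertex_cover 4 A -> k_vertex_cover 4 B ->
     hamming A B <= 8 /\
     (hamming A B = 8 -> (A = V3 /\ B = V4) \/ (A = V4 /\ B = V3))) /\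
  (* (V1, V2) has distance 6 and is a local optimum *)
  (hamming V1 V2 = 6 /\
   forall C : {set V}, vertex_cover C -> (#|C| = 3 \/ #|C| = 4) ->
     (C != V1 -> hamming C V2 < 6) /\ (C != V2 -> hamming V1 C < 6)).
Proof.
have [dV1 dV2 dV3 dV4] := and4P diag_cover_V.
split.
  by split; split; rewrite ?card_V1 ?card_V2 ?card_V3 ?card_V4 //; apply/vertex_coverP.
split.
  by split; apply: non_excessive_labels => //;
    under eq_all => i do rewrite /diag_cover !inE !eq_vE.
split.
  split; first by apply/eqP; rewrite hamming_eq8 -setC_V4 setCK.
  move=> A B [coverA A_le4] [coverB B_le4]; split; first exact: hamming_le8.
  move/eqP; rewrite hamming_eq8 => /eqP B_AC; rewrite B_AC in coverB B_le4 *.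
  case A2: (v 2 \in A).
    have AC_V4 : ~: A = V4 by apply: cover_without_v2; rewrite // inE A2.
    by left; split; rewrite // -setC_V4 -AC_V4 setCK.
  have A_V4 : A = V4 by apply: cover_without_v2; rewrite // A2.
  by right; rewrite A_V4 setC_V4.
split; first by rewrite /hamming card_V; under eq_count => i do rewrite !inE !eq_vE.
move=> C coverC C_34; have C_le4 : #|C| <= 4 by case: C_34 => ->.
by split; [apply: hamming_V2_lt6 | apply: hamming_V1_lt6].
Qed.
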